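(* Let $d:\mathbb{Z}\to\mathbb{C}$ be bounded and $(Ju)(n)=u(n-1)+d(n)u(n)+u(n+1)$ on $\ell^2(\mathbb{Z})$. Suppose there are $b_1\ne b_2$ in $\mathbb{R}$ such that $(\Im(d(n)))_{n\in\mathbb{Z}}$ alternates between $b_1$ and $b_2$, i.e. $\Im(d(n))=b_1$ for all even $n$ and $\Im(d(n))=b_2$ for all odd $n$. Then $J$ has no boundary eigenvalues.
   Context: The numerical range is $\operatorname{Num}(J)=\{\langle Ju,u\rangle:\|u\|=1\}$, and a boundary eigenvalue of $J$ is an eigenvalue of $J$ lying in the topological boundary of $\operatorname{Num}(J)$. *)

From Stdlib Require Import Reals ZArith.
Open Scope R_scope.

Record Cx := mkC { Re : R; Im : R }.

Definition Cadd (z w : Cx) : Cx := mkC (Re z + Re w) (Im z + Im w).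
Definition Csub (z w : Cx) : Cx := mkC (Re z - Re w) (Im z - Im w).
Definition Cmul (z w : Cx) : Cx :=
  mkC (Re z * Re w - Im z * Im w) (Re z * Im w + Im z * Re w).
Definition Cconj (z : Cx) : Cx := mkC (Re z) (- Im z).
Definition Cnorm2 (z : Cx) : R := Re z ^ 2 + Im z ^ 2.
Definition Cnorm (z : Cx) : R := sqrt (Cnorm2 z).
Definition C0 : Cx := mkC 0 0.

Definition sumZ (f : Z -> R) (l : R) : Prop :=
  exists l1 l2,
    infinite_sum (fun k => f (Z.of_nat k)) l1 /\
    infinite_sum (fun k => f (- Z.of_nat (S k))%Z) l2 /\
    l = l1 + l2.

Definition CsumZ (f : Z -> Cx) (l : Cx) : Prop :=
  sumZ (fun n => Re (f n)) (Re l) /\ sumZ (fun n => Im (f n)) (Im l).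

Definition l2_norm2 (u : Z -> Cx) (s : R) : Prop := sumZ (fun n => Cnorm2 (u n)) s.
Definition in_l2 (u : Z -> Cx) : Prop := exists s, l2_norm2 u s.

Definition Jop (d : Z -> Cx) (u : Z -> Cx) : Z -> Cx :=
  fun n => Cadd (Cadd (u (n - 1)%Z) (Cmul (d n) (u n))) (u (n + 1)%Z).

Definition inner (v u : Z -> Cx) (z : Cx) : Prop :=
  CsumZ (fun n => Cmul (v n) (Cconj (u n))) z.

Definition NumRange (d : Z -> Cx) (z : Cx) : Prop :=
  exists u, l2_norm2 u 1 /\ inner (Jop d u) u z.

Definition is_eigenvalue (d : Z -> Cx) (lam : Cx) : Prop :=
  exists u, in_l2 u /\ (exists n, u n <> C0) /\
    forall n, Jop d u n = Cmul lam (u n).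

Definition in_closure (S : Cx -> Prop) (z : Cx) : Prop :=
  forall eps, 0 < eps -> exists w, S w /\ Cnorm (Csub w z) < eps.
Definition in_interior (S : Cx -> Prop) (z : Cx) : Prop :=
  exists eps, 0 < eps /\ forall w, Cnorm (Csub w z) < eps -> S w.
Definition in_boundary (S : Cx -> Prop) (z : Cx) : Prop :=
  in_closure S z /\ ~ in_interior S z.

Definition boundary_eigenvalue (d : Z -> Cx) (lam : Cx) : Prop :=
  is_eigenvalue d lam /\ in_boundary (NumRange d) lam.

Definition bounded_seq (d : Z -> Cx) : Prop := exists M, forall n, Cnorm (d n) <= M.

From Stdlib Require Import Reals ZArith Lra Lia Classical.
Open Scope R_scope.

(* Let u be an l^2 eigenvector of J for the eigenvalue lam.
   1. u is nonzero at some even site m and some odd site m': if u vanished on one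
      parity class, the eigenvalue equation would force u(n+1) = -u(n-1) on the
      other, contradicting u in l^2.
   2. The test vector e = conj(u m') δ_m - conj(u m) δ_m' is orthogonal to u, and
      since the formal adjoint J^* has potential conj(d) = d - 2i Im d, we get
      <J e, u> = <e, J^* u> = 2i (b1 - b2) conj(u m u m') <> 0.
   3. On span{u, e}, J compresses to a 2x2 matrix with diagonal entry lam (J u = lam u)
      and nonzero off-diagonal entry <J e, u>.  Its numerical range, a subset of
      Num(J), is an elliptic disc with lam inside; concretely, for w near lam we solve
      <J v, v> = w with v = a u + b e, ||v|| = 1, choosing |b| by the intermediate
      value theorem and the phase of b by division.
   Hence lam lies in the interior of Num(J) and cannot be a boundary eigenvalue. *)

Lemma infinite_sum_ext (a b : nat -> R) (l : R) :
  (forall k, a k = b k) -> infinite_sum a l -> infinite_sum b l.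
Proof.
  intros E H eps Heps; destruct (H eps Heps) as [N HN]; exists N; intros n Hn.
  replace (sum_f_R0 b n) with (sum_f_R0 a n); auto.
  clear -E; induction n; simpl; rewrite ?IHn, ?E; auto.
Qed.

Lemma infinite_sum_lin (a b : nat -> R) (la lb p q : R) :
  infinite_sum a la -> infinite_sum b lb ->
  infinite_sum (fun k => p * a k + q * b k) (p * la + q * lb).
Proof.
  intros Ha Hb.
  assert (Hpartial : forall n, sum_f_R0 (fun k => p * a k + q * b k) n =
                               p * sum_f_R0 a n + q * sum_f_R0 b n).
  { induction n; simpl; [ring | rewrite IHn; ring]. }
  assert (Hconst : forall c, Un_cv (fun _ : nat => c) c).
  { intros c eps Heps; exists 0%nat; intros; unfold Rdist.
    rewrite Rminus_diag, Rabs_R0; lra. }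
  intros eps Heps.
  destruct (CV_plus _ _ _ _ (CV_mult _ _ _ _ (Hconst p) Ha)
                            (CV_mult _ _ _ _ (Hconst q) Hb) eps Heps) as [N HN].
  exists N; intros n Hn; rewrite Hpartial; apply HN; auto.
Qed.

Lemma infinite_sum_single (a : nat -> R) (k0 : nat) (l : R) :
  (forall k, k <> k0 -> a k = 0) -> a k0 = l -> infinite_sum a l.
Proof.
  intros Hzero <-.
  assert (Hbefore : forall n, (n < k0)%nat -> sum_f_R0 a n = 0).
  { induction n; intros Hn; simpl.
    - apply Hzero; lia.
    - rewrite IHn, Hzero by lia; ring. }
  assert (Hafter : forall n, (k0 <= n)%nat -> sum_f_R0 a n = a k0).
  { induction n; intros Hn.
    - replace k0 with 0%nat by lia; reflexivity.
    - destruct (Nat.eq_dec (S n) k0) as [<- | Hne]; simpl.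
      + rewrite Hbefore by lia; ring.
      + rewrite IHn, (Hzero (S n)) by lia; ring. }
  intros eps Heps; exists k0; intros n Hn; unfold Rdist.
  rewrite Hafter, Rminus_diag, Rabs_R0 by lia; lra.
Qed.

Lemma infinite_sum_term_le (a : nat -> R) (l : R) :
  (forall k, 0 <= a k) -> infinite_sum a l -> forall k, a k <= l.
Proof.
  intros Hpos H k.
  assert (Hle : sum_f_R0 a k <= l).
  { apply growing_ineq; [intros n; simpl; specialize (Hpos (S n)); lra | exact H]. }
  destruct k as [|k]; simpl in *; [lra|].
  assert (0 <= sum_f_R0 a k) by (apply cond_pos_sum; exact Hpos); lra.
Qed.

Lemma infinite_sum_terms_vanish (a : nat -> R) (l : R) :
  infinite_sum a l -> forall eps, 0 < eps ->
  exists N, forall n, (N <= n)%nat -> Rabs (a (S n)) < eps.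
Proof.
  intros H eps Heps. destruct (H (eps / 2)) as [N HN]; [lra|].
  exists N; intros n Hn.
  assert (H1 := HN n ltac:(lia)). assert (H2 := HN (S n) ltac:(lia)).
  unfold Rdist in *; simpl in H2.
  replace (a (S n)) with ((sum_f_R0 a n + a (S n) - l) - (sum_f_R0 a n - l)) by ring.
  eapply Rle_lt_trans; [apply Rabs_triang|]. rewrite Rabs_Ropp. lra.
Qed.

Lemma sumZ_ext (f g : Z -> R) (l : R) :
  (forall n, f n = g n) -> sumZ f l -> sumZ g l.
Proof.
  intros E [l1 [l2 [H1 [H2 ->]]]]; exists l1, l2; split; [|split]; auto;
    eapply infinite_sum_ext; eauto; intros; simpl; auto.
Qed.

Lemma sumZ_lin (f g : Z -> R) (lf lg p q l : R) (h : Z -> R) :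
  sumZ f lf -> sumZ g lg -> (forall n, h n = p * f n + q * g n) ->
  l = p * lf + q * lg -> sumZ h l.
Proof.
  intros [f1 [f2 [Hf1 [Hf2 ->]]]] [g1 [g2 [Hg1 [Hg2 ->]]]] E ->.
  apply (sumZ_ext (fun n => p * f n + q * g n)); [intros; auto|].
  exists (p * f1 + q * g1), (p * f2 + q * g2); split; [|split].
  - exact (infinite_sum_lin _ _ _ _ p q Hf1 Hg1).
  - exact (infinite_sum_lin _ _ _ _ p q Hf2 Hg2).
  - ring.
Qed.

Lemma sumZ_single (f : Z -> R) (k : Z) (l : R) :
  (forall n, n <> k -> f n = 0) -> f k = l -> sumZ f l.
Proof.
  intros Hzero Hk.
  destruct (Z_le_gt_dec 0 k).
  - exists l, 0; split; [|split; [|ring]].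
    + apply (infinite_sum_single _ (Z.to_nat k)).
      * intros j Hj; apply Hzero; lia.
      * rewrite Z2Nat.id by lia; exact Hk.
    + apply (infinite_sum_single _ 0); intros; apply Hzero; lia.
  - exists 0, l; split; [|split; [|ring]].
    + apply (infinite_sum_single _ 0); intros; apply Hzero; lia.
    + apply (infinite_sum_single _ (Z.to_nat (- k - 1))).
      * intros j Hj; apply Hzero; lia.
      * replace (- Z.of_nat (S (Z.to_nat (- k - 1))))%Z with k by lia; exact Hk.
Qed.

Lemma sumZ_pos (f : Z -> R) (l : R) (n0 : Z) :
  (forall n, 0 <= f n) -> 0 < f n0 -> sumZ f l -> 0 < l.
Proof.
  intros Hpos Hn0 [l1 [l2 [H1 [H2 ->]]]].
  assert (B1 := infinite_sum_term_le _ _ (fun k => Hpos _) H1).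
  assert (B2 := infinite_sum_term_le _ _ (fun k => Hpos _) H2).
  assert (P1 := B1 0%nat); assert (P2 := B2 0%nat); cbv beta in *.
  assert (0 <= f (Z.of_nat 0)) by apply Hpos.
  assert (0 <= f (- Z.of_nat 1)%Z) by apply Hpos.
  destruct (Z_le_gt_dec 0 n0).
  - specialize (B1 (Z.to_nat n0)); cbv beta in B1; rewrite Z2Nat.id in B1 by lia; lra.
  - specialize (B2 (Z.to_nat (- n0 - 1))); cbv beta in B2.
    replace (- Z.of_nat (S (Z.to_nat (- n0 - 1))))%Z with n0 in B2 by lia; lra.
Qed.

Lemma Cx_eq (z w : Cx) : Re z = Re w -> Im z = Im w -> z = w.
Proof. destruct z, w; simpl; intros -> ->; reflexivity. Qed.

Lemma Cnorm2_nonneg (z : Cx) : 0 <= Cnorm2 z.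
Proof. unfold Cnorm2; nra. Qed.

Lemma Cnorm2_pos (z : Cx) : z <> C0 -> 0 < Cnorm2 z.
Proof.
  intros Hz; destruct z as [x y]; unfold Cnorm2; simpl.
  destruct (Req_dec x 0) as [->|Hx]; [destruct (Req_dec y 0) as [->|Hy]|].
  - exfalso; apply Hz; reflexivity.
  - assert (0 < y * y) by (apply Rsqr_pos_lt; exact Hy); nra.
  - assert (0 < x * x) by (apply Rsqr_pos_lt; exact Hx); nra.
Qed.

Lemma CsumZ_ext (f g : Z -> Cx) (z : Cx) :
  (forall n, f n = g n) -> CsumZ f z -> CsumZ g z.
Proof. intros E [H1 H2]; split; eapply sumZ_ext; eauto; intros; simpl; rewrite E; auto. Qed.

Lemma CsumZ_add (f g : Z -> Cx) (zf zg : Cx) :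
  CsumZ f zf -> CsumZ g zg -> CsumZ (fun n => Cadd (f n) (g n)) (Cadd zf zg).
Proof.
  intros [F1 F2] [G1 G2]; split; simpl.
  - apply (sumZ_lin _ _ _ _ 1 1 _ _ F1 G1); intros; ring.
  - apply (sumZ_lin _ _ _ _ 1 1 _ _ F2 G2); intros; ring.
Qed.

Lemma CsumZ_scal (c : Cx) (f : Z -> Cx) (z : Cx) :
  CsumZ f z -> CsumZ (fun n => Cmul c (f n)) (Cmul c z).
Proof.
  intros [F1 F2]; split; simpl.
  - apply (sumZ_lin _ _ _ _ (Re c) (- Im c) _ _ F1 F2); intros; ring.
  - apply (sumZ_lin _ _ _ _ (Re c) (Im c) _ _ F2 F1); intros; ring.
Qed.

Lemma CsumZ_single (f : Z -> Cx) (k : Z) (z : Cx) :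
  (forall n, n <> k -> f n = C0) -> f k = z -> CsumZ f z.
Proof.
  intros Hzero <-; split; apply (sumZ_single _ k); auto;
    intros n Hn; rewrite (Hzero n Hn); reflexivity.
Qed.

Lemma inner_ext (x x' y y' : Z -> Cx) (z z' : Cx) :
  inner x y z -> (forall n, x n = x' n) -> (forall n, y n = y' n) -> z = z' ->
  inner x' y' z'.
Proof. intros H Ex Ey <-; revert H; apply CsumZ_ext; intros; rewrite Ex, Ey; reflexivity. Qed.

Lemma inner_add_l (x1 x2 y : Z -> Cx) (z1 z2 : Cx) :
  inner x1 y z1 -> inner x2 y z2 -> inner (fun n => Cadd (x1 n) (x2 n)) y (Cadd z1 z2).
Proof.
  intros H1 H2; eapply CsumZ_ext; [|exact (CsumZ_add _ _ _ _ H1 H2)].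
  intros; apply Cx_eq; simpl; ring.
Qed.

Lemma inner_add_r (x y1 y2 : Z -> Cx) (z1 z2 : Cx) :
  inner x y1 z1 -> inner x y2 z2 -> inner x (fun n => Cadd (y1 n) (y2 n)) (Cadd z1 z2).
Proof.
  intros H1 H2; eapply CsumZ_ext; [|exact (CsumZ_add _ _ _ _ H1 H2)].
  intros; apply Cx_eq; simpl; ring.
Qed.

Lemma inner_scal_l (c : Cx) (x y : Z -> Cx) (z : Cx) :
  inner x y z -> inner (fun n => Cmul c (x n)) y (Cmul c z).
Proof.
  intros H; eapply CsumZ_ext; [|exact (CsumZ_scal c _ _ H)].
  intros; apply Cx_eq; simpl; ring.
Qed.

Lemma inner_scal_r (c : Cx) (x y : Z -> Cx) (z : Cx) :
  inner x y z -> inner x (fun n => Cmul c (y n)) (Cmul (Cconj c) z).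
Proof.
  intros H; eapply CsumZ_ext; [|exact (CsumZ_scal (Cconj c) _ _ H)].
  intros; apply Cx_eq; simpl; ring.
Qed.

Lemma inner_combo_l (a b : Cx) (x1 x2 y : Z -> Cx) (z1 z2 : Cx) :
  inner x1 y z1 -> inner x2 y z2 ->
  inner (fun n => Cadd (Cmul a (x1 n)) (Cmul b (x2 n))) y (Cadd (Cmul a z1) (Cmul b z2)).
Proof. intros H1 H2; apply inner_add_l; apply inner_scal_l; assumption. Qed.

Lemma inner_combo_r (a b : Cx) (x y1 y2 : Z -> Cx) (z1 z2 : Cx) :
  inner x y1 z1 -> inner x y2 z2 ->
  inner x (fun n => Cadd (Cmul a (y1 n)) (Cmul b (y2 n)))
    (Cadd (Cmul (Cconj a) z1) (Cmul (Cconj b) z2)).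
Proof. intros H1 H2; apply inner_add_r; apply inner_scal_r; assumption. Qed.

Lemma inner_self (u : Z -> Cx) (S : R) : l2_norm2 u S -> inner u u (mkC S 0).
Proof.
  intros HS; split; simpl.
  - eapply sumZ_ext; [|exact HS]; intros; unfold Cnorm2; simpl; ring.
  - apply (sumZ_lin _ _ _ _ 0 0 _ _ HS HS); [intros; simpl; ring | ring].
Qed.

Lemma l2_norm2_of_inner (u : Z -> Cx) (z : Cx) : inner u u z -> l2_norm2 u (Re z).
Proof.
  intros [HRe _]; eapply sumZ_ext; [|exact HRe]; intros; unfold Cnorm2; simpl; ring.
Qed.

Definition delta (k : Z) (c : Cx) (n : Z) : Cx := if Z.eq_dec n k then c else C0.

Lemma inner_delta_l (k : Z) (c : Cx) (y : Z -> Cx) :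
  inner (delta k c) y (Cmul c (Cconj (y k))).
Proof.
  apply (CsumZ_single _ k); unfold delta; intros *; destruct Z.eq_dec; try congruence;
    intros; apply Cx_eq; simpl; ring.
Qed.

Lemma inner_delta_r (k : Z) (c : Cx) (x : Z -> Cx) :
  inner x (delta k c) (Cmul (x k) (Cconj c)).
Proof.
  apply (CsumZ_single _ k); unfold delta; intros *; destruct Z.eq_dec; try congruence;
    intros; apply Cx_eq; simpl; ring.
Qed.

(* The formal adjoint of J is the Jacobi operator with conjugated potential. *)
Definition conj_pot (d : Z -> Cx) (n : Z) : Cx := Cconj (d n).

Lemma inner_Jop_delta (d : Z -> Cx) (k : Z) (c : Cx) (y : Z -> Cx) :
  inner (Jop d (delta k c)) y (Cmul c (Cconj (Jop (conj_pot d) y k))).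
Proof.
  eapply (inner_ext
    (fun n => Cadd (Cadd (delta (k + 1) c n) (delta k (Cmul (d k) c) n)) (delta (k - 1) c n))).
  - repeat apply inner_add_l; apply inner_delta_l.
  - intros n; unfold Jop, delta.
    destruct (Z.eq_dec (n - 1) k), (Z.eq_dec n (k + 1)), (Z.eq_dec n k),
      (Z.eq_dec (n + 1) k), (Z.eq_dec n (k - 1)); try lia; subst;
      apply Cx_eq; simpl; ring.
  - reflexivity.
  - unfold Jop, conj_pot; apply Cx_eq; simpl; ring.
Qed.

Definition eigenvector (d : Z -> Cx) (lam : Cx) (u : Z -> Cx) : Prop :=
  forall n, Jop d u n = Cmul lam (u n).

(* Since conj(d n) = d n - 2i Im(d n), an eigenvector of J is mapped by J^* to a
   pointwise multiple of itself, with multiplier lam - 2i Im(d n). *)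
Lemma adjoint_on_eigenvector (d : Z -> Cx) (lam : Cx) (u : Z -> Cx) (n : Z) :
  eigenvector d lam u ->
  Jop (conj_pot d) u n = Cmul (Csub lam (mkC 0 (2 * Im (d n)))) (u n).
Proof.
  intros Heig; assert (E := Heig n); unfold Jop in E |- *.
  assert (ERe := f_equal Re E); assert (EIm := f_equal Im E); simpl in ERe, EIm.
  unfold conj_pot; apply Cx_eq; simpl; lra.
Qed.

(* If an eigenvector vanishes at every site of parity b, then across each such site
   the eigenvalue equation reads u(n+1) = - u(n-1); hence |u| is 2-periodic on the
   other parity class. *)
Lemma eigenvector_parity_chain (d : Z -> Cx) (lam : Cx) (u : Z -> Cx) (b : bool) (n0 : Z) :
  eigenvector d lam u -> (forall n, Z.even n = b -> u n = C0) -> Z.even n0 = negb b ->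
  forall j : nat, Cnorm2 (u (n0 + 2 * Z.of_nat j)%Z) = Cnorm2 (u n0).
Proof.
  intros Heig Hzero Hn0; induction j as [|j IHj].
  - rewrite Z.add_0_r; reflexivity.
  - rewrite <- IHj; set (n := (n0 + 2 * Z.of_nat j + 1)%Z).
    assert (Hn : Z.even n = b).
    { unfold n; rewrite <- Z.add_assoc, (Z.add_comm (2 * _)), Z.add_assoc,
        Z.even_add_mul_2, Z.even_add, Hn0; destruct b; reflexivity. }
    assert (E := Heig n); unfold Jop in E; rewrite (Hzero n Hn) in E.
    replace (n - 1)%Z with (n0 + 2 * Z.of_nat j)%Z in E by (unfold n; lia).
    replace (n + 1)%Z with (n0 + 2 * Z.of_nat (S j))%Z in E by (unfold n; lia).
    assert (ERe := f_equal Re E); assert (EIm := f_equal Im E).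
    cbn [Re Im Cadd Cmul C0] in ERe, EIm; unfold Cnorm2.
    replace (Re (u (n0 + 2 * Z.of_nat (S j))%Z)) with (- Re (u (n0 + 2 * Z.of_nat j)%Z)) by lra.
    replace (Im (u (n0 + 2 * Z.of_nat (S j))%Z)) with (- Im (u (n0 + 2 * Z.of_nat j)%Z)) by lra.
    ring.
Qed.

(* A nonzero l^2 eigenvector is nonzero at some site of each parity: otherwise the
   chain above produces infinitely many terms of equal positive size. *)
Lemma eigenvector_both_parities (d : Z -> Cx) (lam : Cx) (u : Z -> Cx) (b : bool) (n0 : Z) :
  eigenvector d lam u -> in_l2 u -> u n0 <> C0 -> exists m, Z.even m = b /\ u m <> C0.
Proof.
  intros Heig [s [l1 [l2 [H1 _]]]] Hn0.
  apply NNPP; intros Hnone.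
  assert (Hzero : forall n, Z.even n = b -> u n = C0).
  { intros n Hn; apply NNPP; intros Hu; apply Hnone; eauto. }
  assert (Hparity : Z.even n0 = negb b).
  { destruct (Z.even n0) eqn:E, b; auto; exfalso; apply Hn0, Hzero; auto. }
  assert (Hchain := eigenvector_parity_chain _ _ _ _ _ Heig Hzero Hparity).
  assert (Hpos := Cnorm2_pos _ Hn0).
  destruct (infinite_sum_terms_vanish _ _ H1 _ Hpos) as [N HN].
  set (j := (N + 1 + Z.abs_nat n0)%nat).
  set (k := Z.to_nat (n0 + 2 * Z.of_nat j)).
  specialize (HN (k - 1)%nat ltac:(unfold k, j; lia)).
  replace (S (k - 1)) with k in HN by (unfold k, j; lia).
  unfold k in HN; rewrite Z2Nat.id, Hchain, Rabs_right in HN by (unfold j; lia || lra).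
  lra.
Qed.

(** Compression of J to the span of an eigenvector u and a vector e orthogonal to it.
    For v = a u + b e (a real), <J v, v> depends only on the Gram data
    ||u||^2 = S, ||e||^2 = E and on c = <J e, u>, mu = <J e, e>. *)

Lemma Jop_combo (d x y : Z -> Cx) (a b : Cx) (n : Z) :
  Jop d (fun k => Cadd (Cmul a (x k)) (Cmul b (y k))) n =
  Cadd (Cmul a (Jop d x n)) (Cmul b (Jop d y n)).
Proof. unfold Jop; apply Cx_eq; simpl; ring. Qed.

(* <J v, v> for v = a u + b e, in terms of the Gram data. *)
Definition compressed_form (S : R) (lam c mu : Cx) (a : R) (b : Cx) : Cx :=
  Cadd (Cmul (mkC (a * a * S) 0) lam)
       (Cadd (Cmul (mkC a 0) (Cmul b c)) (Cmul (mkC (Cnorm2 b) 0) mu)).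

Lemma numrange_compression (d : Z -> Cx) (lam : Cx) (u e : Z -> Cx) (S E : R)
    (c mu : Cx) (a : R) (b : Cx) :
  eigenvector d lam u ->
  inner u u (mkC S 0) -> inner u e C0 -> inner e u C0 -> inner e e (mkC E 0) ->
  inner (Jop d e) u c -> inner (Jop d e) e mu ->
  a * a * S + Cnorm2 b * E = 1 ->
  NumRange d (compressed_form S lam c mu a b).
Proof.
  intros Heig Huu Hue Heu Hee HJu HJe Hnorm.
  set (v := fun n => Cadd (Cmul (mkC a 0) (u n)) (Cmul b (e n))).
  assert (Huv := inner_combo_r (mkC a 0) b _ _ _ _ _ Huu Hue).
  assert (Hev := inner_combo_r (mkC a 0) b _ _ _ _ _ Heu Hee).
  assert (HJv := inner_combo_r (mkC a 0) b _ _ _ _ _ HJu HJe).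
  exists v; split.
  -
    assert (Hvv := inner_combo_l (mkC a 0) b _ _ _ _ _ Huv Hev).
    replace 1 with (Re (Cadd (Cmul (mkC a 0) (Cadd (Cmul (Cconj (mkC a 0)) (mkC S 0))
                                                  (Cmul (Cconj b) C0)))
                             (Cmul b (Cadd (Cmul (Cconj (mkC a 0)) C0)
                                           (Cmul (Cconj b) (mkC E 0))))))
      by (rewrite <- Hnorm; unfold Cnorm2; simpl; ring).
    exact (l2_norm2_of_inner _ _ Hvv).
  - (* J v = (a lam) u + b (J e), since J u = lam u *)
    eapply inner_ext.
    + exact (inner_combo_l (Cmul (mkC a 0) lam) b _ _ _ _ _ Huv HJv).
    + intros n; unfold v; rewrite Jop_combo, (Heig n); apply Cx_eq; simpl; ring.
    + reflexivity.
    + unfold compressed_form, Cnorm2; apply Cx_eq; simpl; ring.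
Qed.

(** The numerical range of the compression is an elliptic disc (a 2x2 matrix with
    nonzero off-diagonal entry c); we only need that it contains a neighbourhood of
    the diagonal entry lam. *)

Lemma split_modulus (s t : R) (c q : Cx) :
  0 < s -> c <> C0 -> Cnorm2 q = s * t * Cnorm2 c ->
  exists b, Cnorm2 b = t /\ Cmul (mkC (sqrt s) 0) (Cmul b c) = q.
Proof.
  intros Hs Hc Hq.
  assert (Hr2 : sqrt s * sqrt s = s) by (apply sqrt_sqrt; lra).
  assert (Hr : 0 < sqrt s) by (apply sqrt_lt_R0; exact Hs).
  assert (HN := Cnorm2_pos _ Hc).
  set (r := sqrt s) in *; set (N := Cnorm2 c) in *.
  assert (HNdef : N = Re c ^ 2 + Im c ^ 2) by reflexivity.
  exists (mkC ((Re q * Re c + Im q * Im c) / (r * N))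
              ((Im q * Re c - Re q * Im c) / (r * N))).
  split.
  - unfold Cnorm2 at 1; simpl.
    transitivity (Cnorm2 q * N / (r * r * N * N)).
    + unfold Cnorm2; rewrite HNdef; field; rewrite <- HNdef; lra.
    + rewrite Hq, Hr2; field; lra.
  - apply Cx_eq; simpl; rewrite HNdef; field; rewrite <- HNdef; lra.
Qed.

(* For p small, the circle |p - x D|^2 = x (1 - x) K is crossed by some x in [0, 1):
   at x = 0 the left side dominates, at a fixed small x = delta the right side does. *)
Lemma small_crossing (K D1 D2 : R) :
  0 < K -> exists eps, 0 < eps /\ forall p1 p2, p1 ^ 2 + p2 ^ 2 < eps ->
  exists x, 0 <= x < 1 /\ (p1 - x * D1) ^ 2 + (p2 - x * D2) ^ 2 = x * (1 - x) * K.
Proof.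
  intros HK.
  set (M := D1 ^ 2 + D2 ^ 2).
  assert (HM : 0 <= M) by (unfold M; nra).
  set (delta := Rmin (1 / 2) (K / (8 * M + 8))).
  assert (Hdelta_half : delta <= 1 / 2) by apply Rmin_l.
  assert (Hdelta_pos : 0 < delta) by (apply Rmin_pos; [lra | apply Rdiv_lt_0_compat; lra]).
  assert (Hdelta_K : delta * (8 * M + 8) <= K).
  { assert (H := Rmin_r (1 / 2) (K / (8 * M + 8))); fold delta in H.
    apply Rmult_le_compat_r with (r := 8 * M + 8) in H; [|lra].
    unfold Rdiv in H; rewrite Rmult_assoc, Rinv_l, Rmult_1_r in H; lra. }
  exists (delta * K / 8); split; [nra|].
  intros p1 p2 Hp.
  set (h := fun x => x * (1 - x) * K - ((p1 - x * D1) ^ 2 + (p2 - x * D2) ^ 2)).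
  assert (Hh0 : h 0 <= 0) by (unfold h; nra).
  assert (Hhdelta : 0 < h delta).
  { unfold h.
    assert ((p1 - delta * D1) ^ 2 <= 2 * p1 ^ 2 + 2 * (delta ^ 2 * D1 ^ 2))
      by (assert (0 <= (p1 + delta * D1) ^ 2) by apply pow2_ge_0; nra).
    assert ((p2 - delta * D2) ^ 2 <= 2 * p2 ^ 2 + 2 * (delta ^ 2 * D2 ^ 2))
      by (assert (0 <= (p2 + delta * D2) ^ 2) by apply pow2_ge_0; nra).
    assert (2 * delta ^ 2 * M <= delta * K / 4) by nra.
    assert (delta * (1 - delta) * K >= delta * K / 2) by nra.
    unfold M in *; lra. }
  destruct (Rle_lt_or_eq_dec _ _ Hh0) as [Hneg | Hzero].
  - assert (Hcont : continuity h) by (unfold h; reg).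
    destruct (IVT h 0 delta Hcont Hdelta_pos Hneg Hhdelta) as [x [Hx Hhx]].
    exists x; split; [lra|]; unfold h in Hhx; lra.
  - exists 0; split; [lra|]; unfold h in Hzero; lra.
Qed.

Lemma compression_interior (S E : R) (lam c mu : Cx) :
  0 < S -> 0 < E -> c <> C0 ->
  in_interior (fun w => exists a b, a * a * S + Cnorm2 b * E = 1 /\
                                    w = compressed_form S lam c mu a b) lam.
Proof.
  intros HS HE Hc.
  assert (HN := Cnorm2_pos _ Hc).
  destruct (small_crossing (Cnorm2 c / (S * E)) (Re mu / E - Re lam) (Im mu / E - Im lam))
    as [eps [Heps Hcross]]; [apply Rdiv_lt_0_compat; nra|].
  exists (sqrt eps); split; [apply sqrt_lt_R0; exact Heps|].
  intros w Hw.
  destruct (Hcross (Re w - Re lam) (Im w - Im lam)) as [x [Hx Hcircle]].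
  { apply sqrt_lt_0_alt; exact Hw. }
  set (q := mkC ((Re w - Re lam) - x * (Re mu / E - Re lam))
                ((Im w - Im lam) - x * (Im mu / E - Im lam))).
  destruct (split_modulus ((1 - x) / S) (x / E) c q) as [b [Hb Hbq]].
  - apply Rdiv_lt_0_compat; lra.
  - exact Hc.
  - unfold q, Cnorm2 at 1; cbn [Re Im]; rewrite Hcircle; field; lra.
  - assert (Ha : sqrt ((1 - x) / S) * sqrt ((1 - x) / S) = (1 - x) / S)
      by (apply sqrt_sqrt, Rlt_le, Rdiv_lt_0_compat; lra).
    exists (sqrt ((1 - x) / S)), b; split.
    + rewrite Ha, Hb; field; lra.
    + unfold compressed_form; rewrite Hbq, Ha, Hb.
      unfold q; apply Cx_eq; simpl; field; lra.
Qed.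

(** The test vector e = conj(u m') δ_m - conj(u m) δ_m'.  It is orthogonal to u,
    and <J e, u> = <e, J^* u> = 2i (Im d(m) - Im d(m')) conj(u m u m'), which is
    nonzero as soon as the imaginary part of the potential differs at m and m'. *)

Definition two_point (m m' : Z) (al be : Cx) (n : Z) : Cx :=
  Cadd (delta m al n) (delta m' be n).

Lemma inner_Jop_two_point (d : Z -> Cx) (m m' : Z) (al be : Cx) (y : Z -> Cx) :
  inner (Jop d (two_point m m' al be)) y
    (Cadd (Cmul al (Cconj (Jop (conj_pot d) y m)))
          (Cmul be (Cconj (Jop (conj_pot d) y m')))).
Proof.
  eapply inner_ext.
  - exact (inner_add_l _ _ _ _ _ (inner_Jop_delta d m al y) (inner_Jop_delta d m' be y)).
  - intros n; unfold two_point, Jop; apply Cx_eq; simpl; ring.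
  - reflexivity.
  - reflexivity.
Qed.

Lemma off_diagonal_witness (d : Z -> Cx) (lam : Cx) (u : Z -> Cx) (m m' : Z) :
  eigenvector d lam u -> u m <> C0 -> u m' <> C0 -> Im (d m) <> Im (d m') ->
  exists e E c mu, 0 < E /\ c <> C0 /\
    inner u e C0 /\ inner e u C0 /\ inner e e (mkC E 0) /\
    inner (Jop d e) u c /\ inner (Jop d e) e mu.
Proof.
  intros Heig Hum Hum' Him.
  assert (Hmm' : m <> m') by (intros ->; apply Him; reflexivity).
  set (al := Cconj (u m')); set (be := mkC (- Re (u m)) (Im (u m))).
  set (e := two_point m m' al be).
  assert (Hem : e m = al /\ e m' = be).
  { unfold e, two_point, delta.
    destruct (Z.eq_dec m m), (Z.eq_dec m m'), (Z.eq_dec m' m), (Z.eq_dec m' m');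
      try congruence; split; apply Cx_eq; simpl; ring. }
  assert (Hpos := Cnorm2_pos _ Hum); assert (Hpos' := Cnorm2_pos _ Hum').
  exists e, (Cnorm2 (u m) + Cnorm2 (u m')),
    (Cmul (mkC 0 (2 * (Im (d m) - Im (d m')))) (Cconj (Cmul (u m) (u m')))).
  eexists.
  split; [lra|]; split; [|split; [|split; [|split; [|split]]]].
  -
    intros Hc; apply (f_equal Cnorm2) in Hc; revert Hc.
    replace (Cnorm2 (Cmul (mkC 0 (2 * (Im (d m) - Im (d m')))) (Cconj (Cmul (u m) (u m')))))
      with ((2 * (Im (d m) - Im (d m'))) ^ 2 * (Cnorm2 (u m) * Cnorm2 (u m')))
      by (unfold Cnorm2; simpl; ring).
    replace (Cnorm2 C0) with 0 by (unfold Cnorm2; simpl; ring).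
    assert (Hsq : 0 < (2 * (Im (d m) - Im (d m'))) ^ 2)
      by (rewrite <- Rsqr_pow2; apply Rsqr_pos_lt; lra).
    assert (Hprod := Rmult_lt_0_compat _ _ Hsq (Rmult_lt_0_compat _ _ Hpos Hpos')).
    lra.
  - eapply inner_ext; [exact (inner_add_r _ _ _ _ _ (inner_delta_r m al u) (inner_delta_r m' be u))
                      | reflexivity | reflexivity |].
    apply Cx_eq; unfold al, be; simpl; ring.
  - eapply inner_ext; [exact (inner_add_l _ _ _ _ _ (inner_delta_l m al u) (inner_delta_l m' be u))
                      | reflexivity | reflexivity |].
    apply Cx_eq; unfold al, be; simpl; ring.
  - eapply inner_ext; [exact (inner_add_l _ _ _ _ _ (inner_delta_l m al e) (inner_delta_l m' be e))
                      | reflexivity | reflexivity |].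
    destruct Hem as [-> ->]; apply Cx_eq; unfold al, be, Cnorm2; simpl; ring.
  - eapply inner_ext; [exact (inner_Jop_two_point d m m' al be u) | reflexivity | reflexivity |].
    rewrite !(adjoint_on_eigenvector d lam u) by exact Heig.
    apply Cx_eq; unfold al, be; simpl; ring.
  - exact (inner_Jop_two_point d m m' al be e).
Qed.

Theorem mainTheorem10 (d : Z -> Cx) (b1 b2 : R) :
  bounded_seq d ->
  b1 <> b2 ->
  (forall n : Z, Z.even n = true -> Im (d n) = b1) ->
  (forall n : Z, Z.even n = false -> Im (d n) = b2) ->
  forall lam : Cx, ~ boundary_eigenvalue d lam.
Proof.
  intros _ Hb12 Heven Hodd lam [[u [Hl2 [[n0 Hn0] Heig]]] [_ Hnot_interior]].
  apply Hnot_interior.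
  destruct (eigenvector_both_parities d lam u true n0 Heig Hl2 Hn0) as [m [Hm Hum]].
  destruct (eigenvector_both_parities d lam u false n0 Heig Hl2 Hn0) as [m' [Hm' Hum']].
  destruct Hl2 as [S HS].
  assert (HSpos : 0 < S)
    by exact (sumZ_pos _ _ n0 (fun n => Cnorm2_nonneg _) (Cnorm2_pos _ Hn0) HS).
  destruct (off_diagonal_witness d lam u m m' Heig Hum Hum')
    as [e [E [c [mu [HE [Hc [Hue [Heu [Hee [HJu HJe]]]]]]]]]].
  { rewrite (Heven m Hm), (Hodd m' Hm'); exact Hb12. }
  destruct (compression_interior S E lam c mu HSpos HE Hc) as [eps [Heps Hball]].
  exists eps; split; [exact Heps|]; intros w Hw.
  destruct (Hball w Hw) as [a [b [Hab ->]]].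
  exact (numrange_compression d lam u e S E c mu a b Heig (inner_self u S HS)
           Hue Heu Hee HJu HJe Hab).
Qed.
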